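(* Let $n$ be a positive integer and let $N = n^2+n+1$. Call a pair of integers $(k,x)$ a nontrivial solution for $n$ if $k \ge 1$, $x \ge 2$, $x \ne k$, $x \ne 2$, $k \ne n-1$, and \[ \sum_{j=1}^{n} j^3 + x^3 - k^3 = \left( \sum_{j=1}^{n} j + x - k \right)^2 . \] Then a nontrivial solution for $n$ exists if and only if $N$ has at least two prime factors, counted with multiplicity, that are congruent to $1 \pmod 3$.
   Context: The exclusions $x \ne k$, $x\ne 2$, $k \ne n-1$ remove the trivial solutions $(x,x)$ and $(n-1,2)$, which satisfy the identity for every $n$. ''Counted with multiplicity'' means: if $N=\prod p^{e_p}$, the number of such factors is $\sum_{p\equiv 1 \ (\mathrm{mod}\ 3)} e_p$. *)

From mathcomp Require Import all_boot all_order all_algebra.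
Set Implicit Arguments. Unset Strict Implicit. Unset Printing Implicit Defensive.
Import Order.TTheory GRing.Theory Num.Theory.
Local Open Scope ring_scope.

Definition nontrivial_solution (n : nat) (k x : int) : Prop :=
  [/\ 1 <= k, 2 <= x, x != k, x != 2 & k != (n%:Z - 1)] /\
  (\sum_(1 <= j < n.+1) (j%:Z) ^+ 3) + x ^+ 3 - k ^+ 3
    = ((\sum_(1 <= j < n.+1) (j%:Z)) + x - k) ^+ 2.

Definition count_1mod3_factors (N : nat) : nat :=
  (\sum_(p <- primes N | p %% 3 == 1) logn p N)%N.

(* Since the sum of the first n cubes is the square of the sum of the first n
   integers, and twice the latter is n (n + 1), the equation factors as
   (x - k) (Q(x - 1, k + 1) - N) = 0, where Q(a, b) = a^2 + ab + b^2 and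
   N = n^2 + n + 1 = Q(n, 1) = Q(1, n). So nontrivial solutions correspond to
   representations N = Q(u, v) with u, v >= 2. Q(a, b) is the norm of a - b w in
   Z[w], w^2 + w + 1 = 0; every prime factor of N is 3 or 1 mod 3, and 9 does not
   divide N.
   If N = Q(u, v) with u, v >= 2, then Y = u n - v and Z = u n + v + v n - N satisfy
   Y (Z + N) = n^2 Q(u, v) - v^2 Q(n, 1) = (n^2 - v^2) N while 0 < |Y|, |Z| < N, so N
   (or N / 3) is neither 1 nor a prime, and all its prime factors are 1 mod 3.
   Conversely, if p q | N with p, q = 1 mod 3, Thue's lemma gives p = Q(c, d) with
   1 - n w = (c - d w) mu. Then conj (c - d w) mu also has norm N, and it is
   associated neither to 1 - n w nor to its conjugate: the first would make p
   ramify, the second would make q, which divides the norm of mu, divide 1 - n w.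
   Multiplying it by a suitable unit gives u, v >= 2. *)

From mathcomp Require Import all_boot all_order all_algebra all_field zify ring lra.
Set Implicit Arguments. Unset Strict Implicit. Unset Printing Implicit Defensive.
Import Order.TTheory GRing.Theory Num.Theory.

Lemma count_1mod3_factors_rem N p : p \in primes N -> p %% 3 = 1 ->
  count_1mod3_factors N
  = logn p N + \sum_(q <- rem p (primes N) | q %% 3 == 1) logn q N.
Proof. by move=> pN p1; rewrite /count_1mod3_factors (big_rem p) //= p1. Qed.

Lemma count_1mod3_factors_ge2 N : 0 < N ->
  2 <= count_1mod3_factors N <->
  exists p q, [/\ prime p, prime q, p %% 3 = 1, q %% 3 = 1 & p * q %| N].
Proof.
move=> N0; split=> [count2 | [p [q [p_pr q_pr p1 q1 pqN]]]].
  have [p pN /eqP p1] : exists2 p, p \in primes N & p %% 3 == 1.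
    by apply/hasP; apply: contraTT count2 => no_p; rewrite /count_1mod3_factors big_hasC.
  have p_pr : prime p by move: pN; rewrite mem_primes => /andP [].
  rewrite (count_1mod3_factors_rem pN p1) in count2.
  have [p2 | p_lt2] := leqP 2 (logn p N).
    by exists p, p; rewrite mulnn pfactor_dvdn.
  have [q qR /eqP q1] : exists2 q, q \in rem p (primes N) & q %% 3 == 1.
    by apply/hasP; apply: contraTT count2 => no_q; rewrite big_hasC // addn0 -ltnNge.
  move: qR; rewrite mem_rem_uniq ?primes_uniq // inE => /andP [qp qN].
  move: pN qN; rewrite !mem_primes => /and3P [_ _ pN] /and3P [q_pr _ qN].
  exists p, q; split=> //.
  by rewrite Gauss_dvd ?pN ?qN // prime_coprime // dvdn_prime2 // eq_sym.
have pN : p \in primes N by rewrite mem_primes p_pr N0 (dvdn_trans (dvdn_mulr q _) pqN).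
have qN : q \in primes N by rewrite mem_primes q_pr N0 (dvdn_trans (dvdn_mull p _) pqN).
rewrite (count_1mod3_factors_rem pN p1).
have [qp | qp] := eqVneq q p.
  have : 2 <= logn p N by rewrite -pfactor_dvdn // -mulnn -{2}qp.
  by move/leq_trans; apply; apply: leq_addr.
have qR : q \in rem p (primes N) by rewrite mem_rem_uniq ?primes_uniq // inE qp.
rewrite (big_rem q qR) /= q1 eqxx.
by move: pN qN; rewrite -!logn_gt0; lia.
Qed.

Lemma sqr_add_succ_mod n d :
  (n ^ 2 + n + 1) %% d = ((n %% d) ^ 2 + n %% d + 1) %% d.
Proof.
rewrite {1 2}(divn_eq n d); move: (n %/ d) (n %% d) => q r.
have -> : (q * d + r) ^ 2 + (q * d + r) + 1
           = q * (q * d + 2 * r + 1) * d + (r ^ 2 + r + 1) by ring.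
by rewrite modnMDl.
Qed.

Lemma ndvd2_sqr_add_succ n : ~~ (2 %| n ^ 2 + n + 1).
Proof. by rewrite dvdn2 !oddD oddX /= addbb. Qed.

Lemma mod3_of_dvd3_sqr_add_succ n : 3 %| n ^ 2 + n + 1 -> n %% 3 = 1.
Proof.
rewrite /dvdn sqr_add_succ_mod.
have : n %% 3 < 3 by rewrite ltn_mod.
by case: (n %% 3) => [|[|[|]]].
Qed.

Lemma ndvd9_sqr_add_succ n : ~~ (9 %| n ^ 2 + n + 1).
Proof.
rewrite /dvdn sqr_add_succ_mod.
have : n %% 9 < 9 by rewrite ltn_mod.
by case: (n %% 9) => [|[|[|[|[|[|[|[|[|]]]]]]]]].
Qed.

(* [n] is a cube root of unity in F_r, and Fermat's little theorem rules out [r = 2 mod 3]. *)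
Lemma prime_dvd_sqr_add_succ n r :
  prime r -> r %| n ^ 2 + n + 1 -> r = 3 \/ r %% 3 = 1.
Proof.
move=> r_pr dvd_r; have ch := pchar_Fp r_pr.
have : ((n%:R : 'F_r) ^+ 2 + n%:R + 1 = 0)%R.
  by apply/eqP; rewrite -natrX -natrD natr1 -(dvdn_pcharf ch) -addn1.
move: (n%:R : 'F_r)%R => t t_root.
have t3 : (t ^+ 3 = 1)%R.
  apply/eqP; rewrite -subr_eq0.
  have -> : (t ^+ 3 - 1 = (t - 1) * (t ^+ 2 + t + 1))%R by ring.
  by rewrite t_root mulr0.
have [r0 | [r1 | r2]] : r %% 3 = 0 \/ r %% 3 = 1 \/ r %% 3 = 2 by lia.
- by left; apply/eqP; rewrite eq_sym -dvdn_prime2 // /dvdn r0.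
- by right.
have : (t ^+ (r %/ 3 * 3 + r %% 3) = t)%R.
  by rewrite -divn_eq -[in RHS](expf_card t) card_Fp.
rewrite r2 mulnC exprD exprM t3 expr1n mul1r => t2.
have /eqP : (t * (t - 1) = 0)%R by rewrite mulrBr mulr1 -expr2 t2 subrr.
rewrite mulf_eq0 subr_eq0 => /orP [] /eqP t_val; move: t_root; rewrite t_val.
  by rewrite expr0n /= !add0r => /eqP; rewrite oner_eq0.
rewrite expr1n -[(1 + 1)%R]/(2%:R : 'F_r)%R natr1 => /eqP; rewrite -(dvdn_pcharf ch).
by rewrite dvdn_prime2 // => /eqP r3; move: r2; rewrite r3.
Qed.

Lemma prime_pair_dvdn M A B : 0 < M -> M %| A * B -> ~~ (M %| A) -> ~~ (M %| B) ->
  exists p q, [/\ prime p, prime q & p * q %| M].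
Proof.
move=> M0 MAB MA MB; have gM : gcdn M A %| M by apply: dvdn_gcdl.
have g_gt1 : 1 < gcdn M A.
  rewrite ltn_neqAle gcdn_gt0 M0 andbT eq_sym; apply: contra MB => co_MA.
  by rewrite -(Gauss_dvdr B co_MA).
have Mg_gt1 : 1 < M %/ gcdn M A.
  rewrite ltn_divRL // mul1n ltn_neqAle dvdn_leq // andbT.
  by apply: contra MA => /eqP <-; apply: dvdn_gcdr.
exists (pdiv (gcdn M A)), (pdiv (M %/ gcdn M A)); split; try exact: pdiv_prime.
by rewrite -[X in _ %| X](divnK gM) mulnC dvdn_mul ?pdiv_dvd.
Qed.

Lemma two_1mod3_factors_of_dvd n A B :
  n ^ 2 + n + 1 %| A * B -> ~~ (n ^ 2 + n + 1 %| A) -> ~~ (n ^ 2 + n + 1 %| B) ->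
  (3 %| n ^ 2 + n + 1 -> 3 %| A /\ 3 %| B) ->
  exists p q, [/\ prime p, prime q, p %% 3 = 1, q %% 3 = 1 & p * q %| n ^ 2 + n + 1].
Proof.
set N := n ^ 2 + n + 1 => NAB NA NB N3AB.
have [M [MN M3 MA MB MAB]] : exists M, [/\ M %| N, ~~ (3 %| M), ~~ (M %| A),
    ~~ (M %| B) & M %| A * B].
  have [N3 | N3] := boolP (3 %| N); last by exists N.
  have [A3 B3] := N3AB N3; have NM : N = N %/ 3 * 3 by rewrite divnK.
  have co : coprime (N %/ 3) 3.
    rewrite coprime_sym prime_coprime //; apply: contra (ndvd9_sqr_add_succ n).
    by move=> M_3; rewrite -/N NM -[9]/(3 * 3) dvdn_pmul2r.
  exists (N %/ 3); split.
  - by rewrite {2}NM dvdn_mulr.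
  - by rewrite -prime_coprime // coprime_sym.
  - by apply: contra NA => MA; rewrite NM Gauss_dvd // MA A3.
  - by apply: contra NB => MB; rewrite NM Gauss_dvd // MB B3.
  - by apply: dvdn_trans NAB; rewrite {2}NM dvdn_mulr.
have M0 : 0 < M by rewrite lt0n; apply: contraTneq MN => ->; rewrite dvd0n /N addn1.
have [p [q [p_pr q_pr pqM]]] := prime_pair_dvdn M0 MAB MA MB.
have mod3 r : prime r -> r %| M -> r %% 3 = 1.
  move=> r_pr rM; have [r3 | //] := prime_dvd_sqr_add_succ r_pr (dvdn_trans rM MN).
  by move: M3; rewrite -r3 rM.
exists p, q; split=> //; last exact: dvdn_trans pqM MN.
  exact: mod3 p_pr (dvdn_trans (dvdn_mulr q (dvdnn p)) pqM).
exact: mod3 q_pr (dvdn_trans (dvdn_mull p (dvdnn q)) pqM).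
Qed.

Local Open Scope ring_scope.

Lemma sum_nat_double n : 2 * \sum_(1 <= j < n.+1) j%:Z = n%:Z * (n%:Z + 1).
Proof.
elim: n => [|n IH]; first by rewrite big_geq.
by rewrite big_nat_recr //= mulrDr IH intS; ring.
Qed.

Lemma sum_cubes n :
  \sum_(1 <= j < n.+1) j%:Z ^+ 3 = (\sum_(1 <= j < n.+1) j%:Z) ^+ 2.
Proof.
elim: n => [|n IH]; first by rewrite !big_geq.
rewrite !(big_nat_recr n.+1) //= IH intS.
have := sum_nat_double n; move: (\sum_(1 <= j < n.+1) j%:Z) => s hs.
have -> : (s + (1 + n%:Z)) ^+ 2 = s ^+ 2 + (2 * s) * (1 + n%:Z) + (1 + n%:Z) ^+ 2 by ring.
by rewrite hs; ring.
Qed.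

(* [eis_norm a b] is the norm of [a - b w] in Z[w], where w ^ 2 + w + 1 = 0. *)
Definition eis_norm (a b : int) : int := a * a + a * b + b * b.

Lemma eis_normC a b : eis_norm a b = eis_norm b a.
Proof. by rewrite /eis_norm; ring. Qed.

Lemma natz_sqr_add_succ n : (n ^ 2 + n + 1)%N%:Z = eis_norm n%:Z 1.
Proof. by rewrite -mulnn !PoszD PoszM /eis_norm; ring. Qed.

Lemma eis_normM a b c d :
  eis_norm a b * eis_norm c d = eis_norm (a * c - b * d) (a * d + b * c + b * d).
Proof. by rewrite /eis_norm; ring. Qed.

Lemma Euclidz_dvdM (p : nat) (a b : int) :
  prime p -> (p%:Z %| a * b)%Z = (p%:Z %| a)%Z || (p%:Z %| b)%Z.
Proof. by move=> p_pr; rewrite !dvdzE abszM Euclid_dvdM. Qed.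

Lemma eis_norm_inj_l (a a' b : int) : 0 <= a -> 0 <= a' -> 0 <= b ->
  eis_norm a b = eis_norm a' b -> a = a'.
Proof.
move=> a0 a'0 b0 /eqP; rewrite -subr_eq0.
have -> : eis_norm a b - eis_norm a' b = (a - a') * (a + a' + b) by rewrite /eis_norm; ring.
by rewrite mulf_eq0 => /orP [] /eqP; lia.
Qed.

Lemma solution_equation_factor n k x :
  \sum_(1 <= j < n.+1) j%:Z ^+ 3 + x ^+ 3 - k ^+ 3
    - (\sum_(1 <= j < n.+1) j%:Z + x - k) ^+ 2
  = (x - k) * (eis_norm (x - 1) (k + 1) - eis_norm n%:Z 1).
Proof.
rewrite sum_cubes; have := sum_nat_double n.
move: (\sum_(1 <= j < n.+1) j%:Z) => s hs.
have -> : s ^+ 2 + x ^+ 3 - k ^+ 3 - (s + x - k) ^+ 2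
  = (x - k) * (eis_norm (x - 1) (k + 1) - eis_norm n%:Z 1)
    + (x - k) * (n%:Z * (n%:Z + 1) - 2 * s) by rewrite /eis_norm; ring.
by rewrite hs subrr mulr0 addr0.
Qed.

Lemma nontrivial_solution_norm n :
  (exists k x, nontrivial_solution n k x) <->
  exists u v, [/\ 2 <= u, 2 <= v & eis_norm u v = eis_norm n%:Z 1].
Proof.
split=> [[k [x [[k1 x2 xk x_ne2 _] E]]] | [u [v [u2 v2 E]]]].
  exists (x - 1), (k + 1); split; [by move/eqP: x_ne2; lia | lia |].
  move/eqP: E; rewrite -subr_eq0 solution_equation_factor mulf_eq0 subr_eq0.
  by rewrite (negbTE xk) subr_eq0 => /eqP.
have rep_solution u' v' : 2 <= u' -> 2 <= v' -> eis_norm u' v' = eis_norm n%:Z 1 ->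
    v' != u' + 2 -> nontrivial_solution n (v' - 1) (u' + 1).
  move=> u'2 v'2 E' /eqP v'u'; split.
    have v'n : v' != n%:Z.
      apply/eqP => v'n; have : u' = 1; last by lia.
      apply: (@eis_norm_inj_l _ _ n%:Z); [lia | lia | lia |].
      by rewrite -v'n E' v'n /eis_norm; ring.
    by split; move: v'n => /eqP; lia.
  apply/eqP; rewrite -subr_eq0 solution_equation_factor addrK subrK E' subrr.
  by rewrite mulr0.
have [vu | /(rep_solution u v u2 v2 E)] := eqVneq v (u + 2); last by exists (v - 1), (u + 1).
exists (u - 1), (v + 1); apply: rep_solution => //; first by rewrite eis_normC.
by apply/eqP; lia.
Qed.

Lemma ndvdz_small (N : nat) (z : int) :
  z != 0 -> - N%:Z < z < N%:Z -> ~~ (N%:Z %| z)%Z.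
Proof.
move=> z0 /andP [zl zr]; rewrite dvdzE; apply/negP => /dvdn_leq.
by rewrite absz_gt0 => /(_ z0); lia.
Qed.

Lemma eis_norm_rep_le (n u v : int) :
  2 <= v -> 0 <= n -> eis_norm u v = eis_norm n 1 -> u <= n - 1.
Proof. rewrite /eis_norm => v2 n0 E; nia. Qed.

Lemma dvd3_rep_cofactors (n : nat) u v :
  (3 %| n ^ 2 + n + 1)%N -> eis_norm u v = (n ^ 2 + n + 1)%N%:Z ->
  (3 %| u * n%:Z - v)%Z /\ (3 %| u * n%:Z + v + v * n%:Z - (n ^ 2 + n + 1)%N%:Z)%Z.
Proof.
move=> N3 E; have n1 : (3 %| n%:Z - 1)%Z.
  apply/dvdzP; exists (n %/ 3)%N%:Z.
  by rewrite {1}(divn_eq n 3) (mod3_of_dvd3_sqr_add_succ N3) PoszD PoszM addrK.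
have uv : (3 %| u - v)%Z.
  have : (3 %| (u - v) * (u - v))%Z.
    rewrite (_ : (u - v) * (u - v) = (n ^ 2 + n + 1)%N%:Z - 3 * (u * v)).
      by rewrite rpredB ?dvdz_mulr.
    by rewrite -E /eis_norm; ring.
  by rewrite Euclidz_dvdM // orbb.
split.
  rewrite (_ : _ - v = u * (n%:Z - 1) + (u - v)); last by ring.
  by apply: rpredD => //; apply: dvdz_mull.
rewrite (_ : u * n%:Z + v + v * n%:Z = (u + v) * (n%:Z - 1) + (u - v) + 3 * v); last by ring.
apply: rpredB => //; apply: rpredD; last exact: dvdz_mulr.
by apply: rpredD => //; apply: dvdz_mull.
Qed.

Lemma eis_norm_rep_1mod3_factors n u v :
  2 <= u -> 2 <= v -> eis_norm u v = eis_norm n%:Z 1 ->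
  exists p q, [/\ prime p, prime q, p %% 3 = 1, q %% 3 = 1 & p * q %| n ^ 2 + n + 1]%N.
Proof.
move=> u2 v2 E; have n0 : 0 <= n%:Z by [].
have un := eis_norm_rep_le v2 n0 E.
have vn : v <= n%:Z - 1 by apply: (eis_norm_rep_le u2 n0); rewrite eis_normC.
have [un2 unn] : 2 * n%:Z <= u * n%:Z /\ u * n%:Z <= (n%:Z - 1) * n%:Z by split; nia.
have [vn2 vnn] : 2 * n%:Z <= v * n%:Z /\ v * n%:Z <= (n%:Z - 1) * n%:Z by split; nia.
rewrite -natz_sqr_add_succ in E; set N := (n ^ 2 + n + 1)%N in E *.
have NE : N%:Z = n%:Z * n%:Z + n%:Z + 1 by rewrite /N natz_sqr_add_succ /eis_norm; ring.
pose Y := u * n%:Z - v; pose Z := u * n%:Z + v + v * n%:Z - N%:Z.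
have YZ : Y * Z = (n%:Z ^+ 2 - v ^+ 2 - Y) * N%:Z.
  apply/eqP; rewrite -subr_eq0; apply/eqP.
  transitivity (n%:Z ^+ 2 * (eis_norm u v - N%:Z)); first by rewrite /Y /Z NE /eis_norm; ring.
  by rewrite E subrr mulr0.
have Y0 : Y != 0 by apply/eqP; rewrite /Y; lia.
have Z0 : Z != 0.
  apply/eqP => /eqP; rewrite subr_eq0 => /eqP Y'_N.
  have sq := eis_normM u v 1 n%:Z.
  rewrite E !mulr1 Y'_N (_ : eis_norm 1 n%:Z = N%:Z) in sq; last by rewrite NE /eis_norm; ring.
  have : (u - v * n%:Z) * (u - v * n%:Z + N%:Z) = 0.
    transitivity (eis_norm (u - v * n%:Z) N%:Z - N%:Z * N%:Z); first by rewrite /eis_norm; ring.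
    by rewrite -sq subrr.
  by move/eqP; rewrite mulf_eq0 => /orP [] /eqP; lia.
have Y_small : - N%:Z < Y < N%:Z by rewrite /Y; lia.
have Z_small : - N%:Z < Z < N%:Z by rewrite /Z; lia.
have dvd3 : (3 %| N)%N -> (3 %| `|Y|)%N /\ (3 %| `|Z|)%N.
  by move=> N3; rewrite -!(dvdzE 3); apply: dvd3_rep_cofactors.
apply: (two_1mod3_factors_of_dvd (A := `|Y|) (B := `|Z|)) => //.
- by have := dvdz_mull (n%:Z ^+ 2 - v ^+ 2 - Y) (dvdzz N%:Z); rewrite -YZ dvdzE abszM.
- by have := ndvdz_small Y0 Y_small; rewrite dvdzE.
- by have := ndvdz_small Z0 Z_small; rewrite dvdzE.
Qed.

Lemma prime_between_squares p : prime p -> exists s, (s * s < p < s.+1 * s.+1)%N.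
Proof.
move=> p_pr; have [s /andP [lo hi]] : exists s, (s * s <= p < s.+1 * s.+1)%N.
  elim: p {p_pr} => [|p [s /andP [lo hi]]]; first by exists 0%N.
  have [p_lt | p_ge] := ltnP p.+1 (s.+1 * s.+1); first by exists s; rewrite p_lt ltnW.
  by exists s.+1; rewrite p_ge /=; lia.
exists s; rewrite hi andbT ltn_neqAle lo andbT.
apply: contraTneq p_pr => <-; apply/primePn.
have [s_le1 | s_gt1] := leqP s 1; [left; nia | right; exists s].
  by rewrite s_gt1 ltn_Pmull // ltnW.
by rewrite dvdn_mulr.
Qed.

Lemma thue_small_pair (p s n : nat) : (0 < p < s.+1 * s.+1)%N ->
  exists a b : int, [/\ (a != 0) || (b != 0), `|a| <= s%:Z, `|b| <= s%:Z
                      & (p%:Z %| a - n%:Z * b)%Z].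
Proof.
case/andP=> p0 p_lt.
pose f (ij : 'I_s.+1 * 'I_s.+1) : 'I_p := Ordinal (ltn_pmod (ij.1 + n * ij.2) p0).
have /injectivePn [[i1 j1] [[i2 j2] ne12 f12]] : ~~ injectiveb f.
  apply: contraTN p_lt => /injectiveP/leq_card.
  by rewrite card_prod !card_ord -leqNgt.
exists (i1%:Z - i2%:Z), (j2%:Z - j1%:Z); split.
- move: ne12; rewrite xpair_eqE => /nandP [] ne; apply/orP; [left | right].
    by rewrite subr_eq0 eqz_nat.
  by rewrite subr_eq0 eqz_nat eq_sym.
- by have := ltn_ord i1; have := ltn_ord i2; lia.
- by have := ltn_ord j1; have := ltn_ord j2; lia.
have /eqP : (i1 + n * j1 = i2 + n * j2 %[mod p])%N by move/(congr1 val): f12.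
rewrite -(eqz_nat) -!modz_nat eqz_mod_dvd !PoszD !PoszM.
by rewrite (_ : _ - _ = i1%:Z - i2%:Z - n%:Z * (j2%:Z - j1%:Z)) //; ring.
Qed.

Lemma eis_norm_gt0 a b : (a != 0) || (b != 0) -> 0 < eis_norm a b.
Proof. by rewrite /eis_norm; case/orP=> /eqP ?; nia. Qed.

Lemma eis_norm_le a b (s : int) : `|a| <= s -> `|b| <= s -> eis_norm a b <= 3 * s * s.
Proof. by rewrite /eis_norm; nia. Qed.

Lemma int_halves (a : int) : exists a', a = 2 * a' \/ a = 2 * a' + 1.
Proof.
exists (a %/ 2)%Z; have := divz_eq a 2; have := modz_ge0 a (isT : 2 != 0 :> int).
by have := ltz_pmod a (isT : 0 < 2 :> int); lia.
Qed.

Lemma eis_norm_even a b : (2 %| eis_norm a b)%Z -> (2 %| a)%Z && (2 %| b)%Z.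
Proof.
case/dvdzP=> k; rewrite /eis_norm.
have [a' [-> | ->]] := int_halves a; have [b' [-> | ->]] := int_halves b;
  try by move=> e; exfalso; lia.
by rewrite !dvdz_mulr.
Qed.

Lemma eis_norm_prime_rep (p n : nat) : prime p -> (p %| n ^ 2 + n + 1)%N ->
  exists a b, eis_norm a b = p%:Z /\ (p%:Z %| a - n%:Z * b)%Z.
Proof.
move=> p_pr pN; have [s /andP [s_lo s_hi]] := prime_between_squares p_pr.
have p0 := prime_gt0 p_pr.
have [a [b [ab0 a_s b_s p_ab]]] := @thue_small_pair p s n (introT andP (conj p0 s_hi)).
exists a, b; split=> //.
have /dvdzP [k Qk] : (p%:Z %| eis_norm a b)%Z.
  rewrite (_ : eis_norm a b = (a - n%:Z * b) * (a + n%:Z * b + b)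
                              + b ^+ 2 * (n ^ 2 + n + 1)%N%:Z); last first.
    by rewrite natz_sqr_add_succ /eis_norm; ring.
  by apply: rpredD; [apply: dvdz_mulr | apply: dvdz_mull].
have [k1 | k2] : k = 1 \/ k = 2.
  have := eis_norm_gt0 ab0; have := eis_norm_le a_s b_s; rewrite Qk; nia.
  by rewrite Qk k1 mul1r.
have /andP [/dvdzP [a' a_eq] /dvdzP [b' b_eq]] : (2 %| a)%Z && (2 %| b)%Z.
  by apply: eis_norm_even; rewrite Qk k2 dvdz_mulr.
move: Qk; rewrite k2 a_eq b_eq.
rewrite (_ : eis_norm _ _ = 2 * (2 * eis_norm a' b')); last by rewrite /eis_norm; ring.
move/(mulfI (isT : 2 != 0 :> int)) => p_even.
have : (2 %| p)%N by rewrite -(dvdzE 2 p) -p_even dvdz_mulr.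
rewrite dvdn_prime2 // eq_sym => /eqP p2.
by move: pN; rewrite p2 (negbTE (ndvd2_sqr_add_succ n)).
Qed.

(* The conclusion reads [(c - d w) * (x - y w) = 1 - n w]. *)
Lemma eis_prime_factor (p n : nat) : prime p -> (p %| n ^ 2 + n + 1)%N ->
  exists c d x y, [/\ eis_norm c d = p%:Z, c * x - d * y = 1
                    & c * y + d * x + d * y = n%:Z].
Proof.
move=> p_pr pN; have [a [b [Qab /dvdzP [x ab_x]]]] := eis_norm_prime_rep p_pr pN.
have [t Nt] : exists t, eis_norm n%:Z 1 = t * p%:Z.
  by case/dvdnP: pN => t Nt; exists t%:Z; rewrite -natz_sqr_add_succ Nt PoszM.
have p0 : p%:Z != 0 by rewrite eqz_nat -lt0n prime_gt0.
exists (a + b), (- b), x, (n%:Z * x + b * t); split.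
- by rewrite -Qab /eis_norm; ring.
- apply: (mulIf p0); rewrite mul1r -{2}Qab.
  transitivity ((a + b) * (x * p%:Z) + b * (n%:Z * (x * p%:Z) + b * (t * p%:Z))); first by ring.
  by rewrite -ab_x -Nt /eis_norm; ring.
- apply: (mulIf p0); rewrite -{2}[p%:Z]Qab.
  transitivity (a * (n%:Z * (x * p%:Z) + b * (t * p%:Z)) - b * (x * p%:Z)); first by ring.
  by rewrite -ab_x -Nt /eis_norm; ring.
Qed.

Definition dvdz2 (N u v : int) : bool := (N %| u)%Z && (N %| v)%Z.

Lemma dvdz2_comb N u v u' v' al be ga de :
  u' = al * u + be * v -> v' = ga * u + de * v -> dvdz2 N u v -> dvdz2 N u' v'.
Proof.
move=> -> -> /andP [Nu Nv]; apply/andP.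
by split; apply: rpredD; apply: dvdz_mull.
Qed.

(* [N] divides [(a - b w) * conj (t1 - t2 w)] or [(a - b w) * (t1 - t2 w)] in Z[w]. *)
Definition eis_assoc_mod (N t1 t2 a b : int) : bool :=
  dvdz2 N (a * t1 + a * t2 + b * t2) (a * t2 - b * t1)
  || dvdz2 N (a * t1 - b * t2) (a * t2 + b * t1 + b * t2).

Lemma eis_assoc_modN N t1 t2 a b :
  eis_assoc_mod N t1 t2 (- a) (- b) -> eis_assoc_mod N t1 t2 a b.
Proof.
case/orP=> h; apply/orP; [left | right];
  by apply: (dvdz2_comb (al := -1) (be := 0) (ga := 0) (de := -1) _ _ h); ring.
Qed.

Lemma eis_assoc_mod_rot N t1 t2 a b :
  eis_assoc_mod N t1 t2 b (- a - b) -> eis_assoc_mod N t1 t2 a b.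
Proof.
case/orP=> h; apply/orP; [left | right].
  by apply: (dvdz2_comb (al := -1) (be := 1) (ga := -1) (de := 0) _ _ h); ring.
by apply: (dvdz2_comb (al := -1) (be := -1) (ga := 1) (de := 0) _ _ h); ring.
Qed.

Lemma eis_assoc_mod_refl t1 t2 : eis_assoc_mod (eis_norm t1 t2) t1 t2 t1 t2.
Proof.
by apply/orP; left; apply/andP; split; [exact: dvdzz | rewrite mulrC subrr dvdz0].
Qed.

Lemma eis_assoc_mod_swap t1 t2 : eis_assoc_mod (eis_norm t1 t2) t1 t2 t2 t1.
Proof.
apply/orP; right; apply/andP; split; first by rewrite mulrC subrr dvdz0.
by rewrite (_ : _ + _ = eis_norm t1 t2) ?dvdzz // /eis_norm; ring.
Qed.

Lemma eis_norm_normalize (P : int -> int -> Prop) a b :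
  (forall a b, P (- a) (- b) -> P a b) -> (forall a b, P b (- a - b) -> P a b) ->
  (a != 0) || (b != 0) ->
  exists a' b', [/\ 1 <= a', 0 <= b', eis_norm a' b' = eis_norm a b & P a' b' -> P a b].
Proof.
move=> PN PR ab0.
have PR2 x y : P (- x - y) x -> P x y.
  by move=> h; apply: (PR); apply: PR; rewrite (_ : - y - (- x - y) = x) //; ring.
have PNR x y : P (- y) (x + y) -> P x y.
  by move=> h; apply: PR; apply: PN; rewrite (_ : - (- x - y) = x + y) //; ring.
have PNR2 x y : P (x + y) (- x) -> P x y.
  by move=> h; apply: PR2; apply: PN; rewrite (_ : - (- x - y) = x + y) //; ring.
have : (1 <= a /\ 0 <= b) \/ (a <= 0 /\ 1 <= a + b) \/ (a + b <= 0 /\ 1 <= b) \/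
    (a <= -1 /\ b <= 0) \/ (0 <= a /\ a + b <= -1) \/ (b <= -1 /\ 0 <= a + b) by lia.
case=> [[lo hi] | [[lo hi] | [[lo hi] | [[lo hi] | [[lo hi] | [lo hi]]]]]].
- by exists a, b.
- by exists (a + b), (- a); split; [lia | lia | rewrite /eis_norm; ring | exact: PNR2].
- by exists b, (- a - b); split; [lia | lia | rewrite /eis_norm; ring | exact: PR].
- by exists (- a), (- b); split; [lia | lia | rewrite /eis_norm; ring | exact: PN].
- by exists (- a - b), a; split; [lia | lia | rewrite /eis_norm; ring | exact: PR2].
- by exists (- b), (a + b); split; [lia | lia | rewrite /eis_norm; ring | exact: PNR].
Qed.

Lemma prime_dvd_eis_norm (q : nat) c d : prime q -> q != 3%N ->
  (q%:Z %| eis_norm c d)%Z -> (q%:Z %| d * (2 * c + d))%Z ->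
  (q%:Z %| c)%Z && (q%:Z %| d)%Z.
Proof.
move=> q_pr q3 qQ; rewrite Euclidz_dvdM // => qd2cd.
have qd : (q%:Z %| d)%Z.
  case/orP: qd2cd => // q2cd.
  have : (q%:Z %| 3 * (d * d))%Z.
    rewrite (_ : 3 * (d * d) = 4 * eis_norm c d - (2 * c + d) * (2 * c + d)).
      by apply: rpredB; [apply: dvdz_mull | apply: dvdz_mulr].
    by rewrite /eis_norm; ring.
  rewrite !Euclidz_dvdM // orbb => /orP [q_3 | //].
  by move: q_3; rewrite dvdzE /= dvdn_prime2 // (negbTE q3).
have : (q%:Z %| c * c)%Z.
  rewrite (_ : c * c = eis_norm c d - d * (c + d)); last by rewrite /eis_norm; ring.
  by apply: rpredB => //; apply: dvdz_mulr.
by rewrite Euclidz_dvdM // orbb qd andbT.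
Qed.

Lemma eis_norm_prime_ndvd (p : nat) c d : prime p -> eis_norm c d = p%:Z ->
  ~~ ((p%:Z %| c)%Z && (p%:Z %| d)%Z).
Proof.
move=> p_pr Qcd; apply/negP => /andP [/dvdzP [c' c_eq] /dvdzP [d' d_eq]].
have p0 : p%:Z != 0 by rewrite eqz_nat -lt0n prime_gt0.
move: Qcd; rewrite c_eq d_eq (_ : eis_norm _ _ = p%:Z * eis_norm c' d' * p%:Z); last first.
  by rewrite /eis_norm; ring.
move=> pQp; have pQ1 : p%:Z * eis_norm c' d' = 1 by apply: (mulIf p0); rewrite mul1r.
have := dvdz_mulr (eis_norm c' d') (dvdzz p%:Z).
by rewrite pQ1 dvdzE Euclid_dvd1.
Qed.

Lemma eis_norm_not_square (n a : int) : 1 <= n -> 0 <= a -> eis_norm a 0 <> eis_norm n 1.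
Proof.
move=> n1 a0; rewrite /eis_norm => E.
by have [an | an] := lerP a n; nia.
Qed.

(* The last two arguments are the coordinates of [conj (c - d w) * (x - y w)]. *)
Lemma conj_factor_not_assoc (p q : nat) (n c d x y : int) :
  prime p -> prime q -> p != 3%N -> q != 3%N ->
  eis_norm c d = p%:Z -> c * x - d * y = 1 -> c * y + d * x + d * y = n ->
  (q%:Z %| eis_norm x y)%Z ->
  ~~ eis_assoc_mod (eis_norm 1 n) 1 n ((c + d) * x + d * y) (c * y - d * x).
Proof.
move=> p_pr q_pr p3 q3 Qcd t1 t2 q_m; set m := eis_norm x y.
have Nm : eis_norm 1 n = p%:Z * m by rewrite -Qcd eis_normM t1 t2.
have m0 : m != 0.
  have : 0 < eis_norm 1 n by apply: eis_norm_gt0; rewrite oner_neq0.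
  by rewrite Nm; apply: contraTneq => ->; rewrite mulr0 ltxx.
have p0 : p%:Z != 0 by rewrite eqz_nat -lt0n prime_gt0.
have e1 : ((c + d) * x + d * y) * n - (c * y - d * x) * 1 = m * (d * (2 * c + d)).
  by rewrite -[in LHS]t1 -t2 /m /eis_norm; ring.
have e2 : ((c + d) * x + d * y) * n + (c * y - d * x) * 1 + (c * y - d * x) * n
          = p%:Z * (y * (2 * x + y)).
  by rewrite -[in LHS]t1 -t2 -Qcd /eis_norm; ring.
apply/negP; case/orP=> /andP [_].
  rewrite e1 Nm [p%:Z * m]mulrC dvdz_mul2l // => p_d2cd.
  have := prime_dvd_eis_norm p_pr p3 _ p_d2cd; rewrite Qcd dvdzz => /(_ isT).
  by apply/negP; apply: eis_norm_prime_ndvd.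
rewrite e2 Nm dvdz_mul2l // => m_y2xy.
have /andP [qx qy] := prime_dvd_eis_norm q_pr q3 q_m (dvdz_trans q_m m_y2xy).
have : (q%:Z %| c * x - d * y)%Z by apply: rpredB; apply: dvdz_mull.
by rewrite t1 dvdzE Euclid_dvd1.
Qed.

Lemma not_assoc_rep_ge2 (n a b : int) : 1 <= n ->
  eis_norm a b = eis_norm 1 n -> ~~ eis_assoc_mod (eis_norm 1 n) 1 n a b ->
  exists u v, [/\ 2 <= u, 2 <= v & eis_norm u v = eis_norm n 1].
Proof.
set N := eis_norm 1 n => n1 Qab not_assoc.
have ab0 : (a != 0) || (b != 0).
  apply: contraTT n1; rewrite negb_or !negbK => /andP [/eqP a0 /eqP b0].
  by move: Qab; rewrite a0 b0 /N /eis_norm; lia.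
have [u [v [u1 v0 Quv assoc_uv]]] :=
  eis_norm_normalize (@eis_assoc_modN N 1 n) (@eis_assoc_mod_rot N 1 n) ab0.
rewrite Qab in Quv; have {assoc_uv}not_assoc_uv := contra assoc_uv not_assoc.
have QvN : eis_norm v 1 = eis_norm n 1 -> v = n by apply: eis_norm_inj_l; lia.
have QuN : eis_norm u 1 = eis_norm n 1 -> u = n by apply: eis_norm_inj_l; lia.
exists u, v; split.
- have : u != 1; last by lia.
  apply: contraNneq not_assoc_uv => u_1; rewrite u_1 in Quv.
  by rewrite u_1 QvN ?eis_assoc_mod_refl // eis_normC Quv eis_normC.
- have : v != 0.
    apply/eqP => v_0; move: Quv; rewrite v_0 /N [eis_norm 1 _]eis_normC.
    by apply: eis_norm_not_square; lia.
  have : v != 1; last by lia.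
  apply: contraNneq not_assoc_uv => v_1; rewrite v_1 in Quv.
  by rewrite v_1 QuN ?eis_assoc_mod_swap // Quv eis_normC.
- by rewrite Quv eis_normC.
Qed.

Lemma prime_pair_eis_norm_rep n p q :
  prime p -> prime q -> (p %% 3 = 1)%N -> (q %% 3 = 1)%N -> (p * q %| n ^ 2 + n + 1)%N ->
  exists u v, [/\ 2 <= u, 2 <= v & eis_norm u v = eis_norm n%:Z 1].
Proof.
move=> p_pr q_pr p1 q1 pqN.
have pN := dvdn_trans (dvdn_mulr q (dvdnn p)) pqN.
have n1 : 1 <= n%:Z.
  case: n pN {pqN} => [|n _]; last by lia.
  by rewrite dvdn1 => /eqP p_eq1; move: p_pr; rewrite p_eq1.
have p3 : p != 3%N by apply/eqP => p3; move: p1; rewrite p3.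
have q3 : q != 3%N by apply/eqP => q3; move: q1; rewrite q3.
have [c [d [x [y [Qcd t1 t2]]]]] := eis_prime_factor p_pr pN.
have Nm : eis_norm 1 n%:Z = p%:Z * eis_norm x y by rewrite -Qcd eis_normM t1 t2.
have q_m : (q%:Z %| eis_norm x y)%Z.
  have : ((p * q)%N%:Z %| p%:Z * eis_norm x y)%Z.
    by rewrite -Nm eis_normC -natz_sqr_add_succ dvdzE.
  by rewrite PoszM dvdz_mul2l // eqz_nat -lt0n prime_gt0.
apply: (not_assoc_rep_ge2 n1 _ (conj_factor_not_assoc p_pr q_pr p3 q3 Qcd t1 t2 q_m)).
rewrite Nm -Qcd (_ : eis_norm c d = eis_norm (c + d) (- d)); last by rewrite /eis_norm; ring.
by rewrite eis_normM; congr eis_norm; ring.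
Qed.

Unset Implicit Arguments.

Theorem theorem2 (n : nat) (hn : (0 < n)%N) :
  (exists k x : int, nontrivial_solution n k x) <->
  (2 <= count_1mod3_factors (n ^ 2 + n + 1))%N.
Proof.
rewrite nontrivial_solution_norm count_1mod3_factors_ge2; last by rewrite addn1.
split=> [[u [v [u2 v2 E]]] | [p [q [p_pr q_pr p1 q1 pqN]]]].
  exact: eis_norm_rep_1mod3_factors u2 v2 E.
exact: prime_pair_eis_norm_rep p_pr q_pr p1 q1 pqN.
Qed.
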